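(* Suppose the polytope $P_o=\mathrm{conv}\{v_1,\dots,v_{d+1}\}\subseteq\mathbb{R}^d$ contains the Euclidean ball $B_{4d^8}(0)$. Then there exist $d+1$ integer points $g_1,\dots,g_{d+1}\in\mathbb{Z}^d\cap\frac{2}{d^2}P_o$ (where $\frac{2}{d^2}P_o=\{\frac{2}{d^2}p:p\in P_o\}$) such that: (1) if $(\lambda_1,\dots,\lambda_{d+1})\in\Delta^{d+1}$ satisfies $\sum_i\lambda_i v_i=0$, then there exists $(\lambda_1',\dots,\lambda_{d+1}')\in\Delta^{d+1}$ with $\sum_i\lambda_i' g_i=0$ and $\frac12\lambda_i'\le\lambda_i\le2\lambda_i'$ for all $i$; (2) for every $i\in[d+1]$ there exists $(\lambda^i_1,\dots,\lambda^i_{d+1})\in\Delta^{d+1}$ with $\lambda^i_i\ge\frac{1}{2d^2}$ and $$g_i=\lambda^i_i v_i+\sum_{j\ne i}\lambda^i_j g_j.$$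
   Context: $\Delta^{m}$ denotes the probability simplex $\{\lambda\in\mathbb{R}^m_{\ge0}:\sum_i\lambda_i=1\}$; $B_r(c)$ denotes the Euclidean ball of radius $r$ centered at $c$. *)

From mathcomp Require Import all_boot all_order all_algebra.
From mathcomp Require Import reals.
Set Implicit Arguments. Unset Strict Implicit. Unset Printing Implicit Defensive.
Import Order.TTheory GRing.Theory Num.Theory.
Local Open Scope ring_scope.

Definition in_simplex (R : realType) (m : nat) (lam : 'I_m -> R) : Prop :=
  (forall i, 0 <= lam i) /\ \sum_(i < m) lam i = 1.

Definition conv (R : realType) (d m : nat) (v : 'I_m -> 'rV[R]_d) : 'rV[R]_d -> Prop :=
  fun x => exists lam : 'I_m -> R, in_simplex lam /\ x = \sum_(i < m) lam i *: v i.

Definition sqnorm (R : realType) (d : nat) (x : 'rV[R]_d) : R :=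
  \sum_(j < d) x ord0 j ^+ 2.

Definition ball_euclid (R : realType) (d : nat) (c : 'rV[R]_d) (r : R) : 'rV[R]_d -> Prop :=
  fun x => 0 <= r /\ sqnorm (x - c) <= r ^+ 2.

Definition is_int_point (R : realType) (d : nat) (x : 'rV[R]_d) : Prop :=
  forall j, x ord0 j \is a Num.int.

Definition dilate (R : realType) (d : nat) (t : R) (P : 'rV[R]_d -> Prop) : 'rV[R]_d -> Prop :=
  fun x => exists p, P p /\ x = t *: p.

(* Let lam0 be the barycentric coordinates of 0 in P_o; they are
   unique since the inscribed ball forces v_1, ..., v_(d+1) to be affinely
   independent.  Put t = 2/(3d^2) and let g_i be the integer point nearest to
   t v_i.  The rounding error g_i - t v_i has norm at most sqrt(d)/2, tiny
   against the inscribed ball, so it equals sum_k c_ik v_k with sum_k c_ik = 0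
   and |c_ik| <= s lam0_k, where s = 1/(8d^7).  Hence g_i = sum_k beta_ik v_k
   with beta_ik = t [i = k] + (1 - t) lam0_k + c_ik.  As s is small against t,
   each system b beta = tau has a solution, and an l1 estimate keeps it close
   to the unperturbed one: tau = lam0 yields coordinates of 0 in the g_i that
   are within a factor 2 of lam0, giving (1); tau = e_i yields
   v_i = sum_j b_j g_j with 0 < t b_i <= 4/3 and b_j <= 0 for j <> i, and
   solving for g_i gives (2) with weight 1/b_i >= 1/(2d^2) on v_i. *)

From mathcomp Require Import all_boot all_order all_algebra.
From mathcomp Require Import reals ring lra.
Import Order.TTheory GRing.Theory Num.Theory.
Local Open Scope ring_scope.

Lemma sum_scale_rowE {R : pzRingType} {d n} (a : 'I_n -> R) (v : 'I_n -> 'rV[R]_d) k :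
  (\sum_i a i *: v i) ord0 k = \sum_i a i * v i ord0 k.
Proof. by rewrite summxE; apply: eq_bigr => i _; rewrite mxE. Qed.

Lemma sumr_mul_delta {R : pzSemiRingType} {n} (f : 'I_n -> R) k :
  \sum_j f j * (j == k)%:R = f k.
Proof.
by rewrite (bigD1 k) //= eqxx mulr1 big1 ?addr0 // => j /negbTE ->; rewrite mulr0.
Qed.

Lemma sumr_delta {R : pzSemiRingType} {n} (i : 'I_n) : \sum_j (i == j)%:R = 1 :> R.
Proof. by rewrite (bigD1 i) //= eqxx big1 ?addr0 // => j; rewrite eq_sym => /negbTE ->. Qed.

Lemma sum_deltaZ {R : pzRingType} {V : lmodType R} {n} (f : 'I_n -> V) i :
  \sum_j (i == j)%:R *: f j = f i.
Proof.
rewrite (bigD1 i) //= eqxx scale1r big1 ?addr0 // => j.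
by rewrite eq_sym => /negbTE ->; rewrite scale0r.
Qed.

Lemma sqnormZ {R : realType} {d} (a : R) (x : 'rV[R]_d) : sqnorm (a *: x) = a ^+ 2 * sqnorm x.
Proof. by rewrite /sqnorm mulr_sumr; apply: eq_bigr => k _; rewrite mxE exprMn. Qed.

Lemma sqnormN {R : realType} {d} (x : 'rV[R]_d) : sqnorm (- x) = sqnorm x.
Proof. by rewrite /sqnorm; apply: eq_bigr => k _; rewrite mxE sqrrN. Qed.

Lemma ball_euclid_center {R : realType} {d} {r : R} : 0 <= r -> ball_euclid 0 r (0 : 'rV[R]_d).
Proof.
move=> r0; split=> //; rewrite /sqnorm big1 ?exprn_ge0 // => k _.
by rewrite !mxE subr0 expr0n.
Qed.

Lemma conv_vertex {R : realType} {d n} (v : 'I_n -> 'rV[R]_d) i : conv v (v i).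
Proof.
exists (fun j => (i == j)%:R); split; last by rewrite sum_deltaZ.
by split; [move=> j; case: (i == j) | exact: sumr_delta].
Qed.

Lemma conv_convex {R : realType} {d n} (v : 'I_n -> 'rV[R]_d) (a : R) x y :
  0 <= a <= 1 -> conv v x -> conv v y -> conv v (a *: x + (1 - a) *: y).
Proof.
move=> /andP [a0 a1] [lx [[lx0 lx1] ->]] [ly [[ly0 ly1] ->]].
exists (fun i => a * lx i + (1 - a) * ly i); split; first split.
- by move=> i; apply: addr_ge0; apply: mulr_ge0 => //; lra.
- by rewrite big_split /= -!mulr_sumr lx1 ly1; ring.
- rewrite !scaler_sumr -big_split /=; apply: eq_bigr => i _.
  by rewrite !scalerA -scalerDl.
Qed.

Lemma conv_affine_eq0 {R : realType} {d n} (v : 'I_n -> 'rV[R]_d) (w0 : R) (w : 'rV[R]_d) x :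
  (forall j, w0 + \sum_k w 0 k * v j 0 k = 0) ->
  conv v x -> w0 + \sum_k w 0 k * x 0 k = 0.
Proof.
move=> wv [a [[a0 a1] ->]].
under eq_bigr do rewrite sum_scale_rowE mulr_sumr.
rewrite exchange_big /= -[w0]mulr1 -a1 mulr_sumr -big_split /=.
apply: big1 => j _.
transitivity (a j * (w0 + \sum_k w 0 k * v j 0 k)); last by rewrite wv mulr0.
rewrite mulrDr mulr_sumr mulrC.
by congr (_ + _); apply: eq_bigr => k _; rewrite mulrCA.
Qed.

Lemma ball_affine_eq0 {R : realType} {d} (r : R) (w0 : R) (w : 'rV[R]_d) : 0 < r ->
  (forall x, ball_euclid 0 r x -> w0 + \sum_k w 0 k * x 0 k = 0) -> w0 = 0 /\ w = 0.
Proof.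
move=> r0 wball.
have w00 : w0 = 0.
  have := wball 0 (ball_euclid_center (ltW r0)).
  by rewrite big1 ?addr0 // => k _; rewrite mxE mulr0.
split=> //; apply/rowP => k; rewrite [RHS]mxE.
pose x : 'rV[R]_d := \row_j (if j == k then r else 0).
have xball : ball_euclid 0 r x.
  split; first exact: ltW.
  rewrite /sqnorm (bigD1 k) //= big1 ?addr0; first by rewrite !mxE eqxx subr0.
  by move=> j /negbTE jk; rewrite !mxE jk subr0 expr0n.
have := wball x xball; rewrite w00 add0r (bigD1 k) //= big1 ?addr0.
  by rewrite mxE eqxx => /eqP; rewrite mulf_eq0 (gt_eqF r0) orbF => /eqP.
by move=> j /negbTE jk; rewrite mxE jk mulr0.
Qed.

(* The rows (1, v_j) of [W] are independent: an affine form vanishing at every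
   v_j vanishes on [conv v], hence on the ball, hence is zero. *)
Lemma conv_ball_affine_indep {R : realType} {d} {v : 'I_d.+1 -> 'rV[R]_d} {r : R} : 0 < r ->
  (forall x, ball_euclid 0 r x -> conv v x) ->
  forall k : 'I_d.+1 -> R, \sum_j k j *: v j = 0 -> \sum_j k j = 0 -> forall j, k j = 0.
Proof.
move=> r0 hball k kv k0.
pose W : 'M[R]_d.+1 :=
  \matrix_(j, i) (if unlift ord0 i is Some i' then v j 0 i' else 1).
have W_affine (w : 'rV[R]_d.+1) j : (w *m W^T) 0 j =
    w 0 ord0 + \sum_i (\row_i w 0 (lift ord0 i)) 0 i * v j 0 i.
  rewrite !mxE big_ord_recl !mxE unlift_none mulr1; congr (_ + _).
  by apply: eq_bigr => i _; rewrite !mxE liftK.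
have Wtr_inj (w : 'rV[R]_d.+1) : w *m W^T = 0 -> w = 0.
  move=> wW; have [w0 w'0] : w 0 ord0 = 0 /\ \row_i w 0 (lift ord0 i) = 0.
    apply: (ball_affine_eq0 r) => // x /hball; apply: conv_affine_eq0 => j.
    by rewrite -W_affine wW mxE.
  apply/rowP => i; rewrite mxE; case: (unliftP ord0 i) => [i'|] ->.
    by move/rowP/(_ i'): w'0; rewrite !mxE.
  exact: w0.
have /row_free_inj W_inj : row_free W.
  by rewrite row_free_unit -unitmx_tr -row_free_unit; apply: inj_row_free.
have kW : (\row_j k j) *m W = 0 *m W.
  rewrite mul0mx; apply/rowP => i; rewrite !mxE.
  under eq_bigr do rewrite !mxE.
  case: (unliftP ord0 i) => [i' _|_] /=.
    by rewrite -(sum_scale_rowE k v i') kv mxE.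
  by under eq_bigr do rewrite mulr1.
by move=> j; move/rowP/(_ j): (W_inj _ _ _ kW); rewrite !mxE.
Qed.

Section SmallVectors.
Context {R : realType} {d : nat} {v : 'I_d.+1 -> 'rV[R]_d} {r : R} {lam : 'I_d.+1 -> R}.
Hypotheses (r_gt0 : 0 < r) (hball : forall x, ball_euclid 0 r x -> conv v x).
Hypotheses (lam_simplex : in_simplex lam) (lam_v : \sum_j lam j *: v j = 0).

Lemma small_vector_lower_decomp {s : R} {w} : 0 < s -> sqnorm w <= (s * r) ^+ 2 ->
  exists c : 'I_d.+1 -> R, \sum_j c j *: v j = w /\ \sum_j c j = 0 /\
    forall j, - (s * lam j) <= c j.
Proof.
move=> s0 hw; case: lam_simplex => lam0 lam1.
have [a [[a0 a1] wa]] : conv v (s^-1 *: w).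
  apply: hball; split; first exact: ltW.
  rewrite subr0 sqnormZ -(ler_pM2l (exprn_gt0 2 s0)) mulrA -exprMn mulfV ?gt_eqF //.
  by rewrite expr1n mul1r -exprMn.
exists (fun j => s * (a j - lam j)); split; last split.
- under eq_bigr do rewrite -scalerA scalerBl.
  by rewrite -scaler_sumr sumrB -wa lam_v subr0 scalerA mulfV ?gt_eqF // scale1r.
- by rewrite -mulr_sumr sumrB a1 lam1 subrr mulr0.
- by move=> j; have := mulr_ge0 (ltW s0) (a0 j); rewrite mulrBr; lra.
Qed.

Lemma small_vector_decomp {s : R} {w} : 0 < s -> sqnorm w <= (s * r) ^+ 2 ->
  exists c : 'I_d.+1 -> R, \sum_j c j *: v j = w /\ \sum_j c j = 0 /\
    forall j, `|c j| <= s * lam j.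
Proof.
move=> s0 hw.
have [c [cv [c0 c_ge]]] := small_vector_lower_decomp s0 hw.
have [c' [cv' [c'0 c'_ge]]] : exists c' : 'I_d.+1 -> R, \sum_j c' j *: v j = - w /\
    \sum_j c' j = 0 /\ forall j, - (s * lam j) <= c' j.
  by apply: small_vector_lower_decomp; rewrite ?sqnormN.
(* The decompositions of w and -w add up to an affine dependence of the v_j. *)
have c'E : forall j, c j + c' j = 0.
  apply: (conv_ball_affine_indep r_gt0 hball (fun j => c j + c' j)).
  - by under eq_bigr do rewrite scalerDl; rewrite big_split /= cv cv' subrr.
  - by rewrite big_split /= c0 c'0 addr0.
exists c; do 2!split=> //; move=> j.
by have := c'E j; have := c_ge j; have := c'_ge j; rewrite ler_norml; lra.
Qed.

End SmallVectors.

Definition beta {R : pzRingType} {n} (t : R) (lam : 'I_n -> R) (c : 'I_n -> 'I_n -> R) j k :=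
  t * (j == k)%:R + (1 - t) * lam k + c j k.

Definition solves {R : pzRingType} {n} (t : R) lam c (b tau : 'I_n -> R) :=
  forall k, \sum_j b j * beta t lam c j k = tau k.

Section PerturbedBarycentric.
Context {R : realFieldType} {n : nat} {t s : R} {lam : 'I_n -> R} {c : 'I_n -> 'I_n -> R}.
Hypotheses (t_gt0 : 0 < t) (s_ge0 : 0 <= s).
Hypotheses (lam_ge0 : forall k, 0 <= lam k) (lam_sum1 : \sum_k lam k = 1).
Hypotheses (c_sum0 : forall j, \sum_k c j k = 0) (c_small : forall j k, `|c j k| <= s * lam k).

Lemma sum_mul_beta (b : 'I_n -> R) k : \sum_j b j * beta t lam c j k =
  t * b k + (1 - t) * lam k * \sum_j b j + \sum_j b j * c j k.
Proof.
rewrite /beta; under eq_bigr do rewrite !mulrDr.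
rewrite !big_split /= mulr_sumr -(sumr_mul_delta (fun j => t * b j)).
by congr (_ + _ + _); apply: eq_bigr => j _; ring.
Qed.

Lemma sum_beta_row j : \sum_k beta t lam c j k = 1.
Proof.
rewrite /beta !big_split /= -[\sum_k (1 - t) * lam k]mulr_sumr lam_sum1 c_sum0 addr0 mulr1.
by rewrite -mulr_sumr sumr_delta; ring.
Qed.

Lemma solves_sum {b tau : 'I_n -> R} : solves t lam c b tau -> \sum_j b j = \sum_k tau k.
Proof.
move=> hb; under [RHS]eq_bigr do rewrite -hb.
rewrite exchange_big /=; apply: eq_bigr => j _.
by rewrite -mulr_sumr sum_beta_row mulr1.
Qed.

Lemma solves_coord_bound {b tau : 'I_n -> R} k : solves t lam c b tau ->
  `|t * b k - (tau k - (1 - t) * lam k * \sum_j b j)| <= s * lam k * \sum_j `|b j|.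
Proof.
move=> hb; rewrite -hb sum_mul_beta (_ : _ - _ = - \sum_j b j * c j k); last by ring.
rewrite normrN; apply: le_trans (ler_norm_sum _ _ _) _.
rewrite mulr_sumr; apply: ler_sum => j _; rewrite normrM mulrC.
exact: ler_wpM2r.
Qed.

Lemma solves_sum_norm_le {b tau : 'I_n -> R} : solves t lam c b tau ->
  (t - s) * \sum_j `|b j| <= \sum_k `|tau k - (1 - t) * lam k * \sum_j b j|.
Proof.
move=> hb; set S := \sum_j `|b j|.
have coord k : t * `|b k| <= `|tau k - (1 - t) * lam k * \sum_j b j| + s * lam k * S.
  set X := tau k - _; rewrite -(gtr0_norm t_gt0) -normrM.
  have := ler_normD (t * b k - X) X; rewrite subrK.
  have := solves_coord_bound k hb; rewrite -/X -/S; lra.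
have : \sum_k t * `|b k| <= \sum_k (`|tau k - (1 - t) * lam k * \sum_j b j| + s * lam k * S).
  by apply: ler_sum => k _; apply: coord.
rewrite big_split /= -mulr_sumr -mulr_suml -mulr_sumr lam_sum1 mulr1 -/S; lra.
Qed.

Lemma solves0_eq0 b : s < t -> solves t lam c b (fun=> 0) -> forall j, b j = 0.
Proof.
move=> st hb; have b0 : \sum_j b j = 0 by rewrite (solves_sum hb) big1.
have := solves_sum_norm_le hb; rewrite b0.
under [X in _ <= X]eq_bigr do rewrite mulr0 subrr normr0.
rewrite big1_eq pmulr_rle0 ?subr_gt0 // => S_le0 j.
have S0 : \sum_j `|b j| = 0 by apply/eqP; rewrite eq_le S_le0 sumr_ge0.
by apply/normr0_eq0; apply: (psumr_eq0P _ S0).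
Qed.

Lemma solves_exists tau : s < t -> exists b, solves t lam c b tau.
Proof.
move=> st; pose M : 'M[R]_n := \matrix_(j, k) beta t lam c j k.
have Mu : M \in unitmx.
  rewrite -row_free_unit; apply: inj_row_free => u uM; apply/rowP => j; rewrite mxE.
  apply: (solves0_eq0 (u 0) st) => k.
  move/rowP/(_ k): uM; rewrite !mxE => uMk; rewrite -[RHS]uMk.
  by apply: eq_bigr => i _; rewrite /M mxE.
exists (fun j => ((\row_k tau k) *m invmx M) 0 j) => k.
move/rowP/(_ k): (mulmxKV Mu (\row_k tau k)); rewrite !mxE => <-.
by apply: eq_bigr => j _; rewrite [M _ _]mxE.
Qed.

Lemma solves_lam b : 3 * s <= t -> solves t lam c b lam ->
  \sum_j b j = 1 /\ forall k, 0 <= b k /\ b k / 2 <= lam k /\ lam k <= 2 * b k.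
Proof.
move=> st hb; have Sb : \sum_j b j = 1 by rewrite (solves_sum hb).
split=> // k.
have S0 : 0 <= \sum_j `|b j| by apply: sumr_ge0.
have L1 : (t - s) * \sum_j `|b j| <= \sum_k t * lam k.
  apply: le_trans (solves_sum_norm_le hb) _; rewrite Sb; apply: ler_sum => j _.
  rewrite mulr1 (_ : _ - _ = t * lam j); last by ring.
  by rewrite ger0_norm // mulr_ge0 // ltW.
rewrite -mulr_sumr lam_sum1 mulr1 in L1.
have sS : 2 * (s * \sum_j `|b j|) <= t.
  have : 0 <= (t - 3 * s) * \sum_j `|b j| by rewrite mulr_ge0 // subr_ge0.
  lra.
have := solves_coord_bound k hb; rewrite Sb mulr1 ler_norml => /andP [lo hi].
have gap : 0 <= lam k * (t - 2 * (s * \sum_j `|b j|)).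
  by rewrite mulr_ge0 // subr_ge0.
have lo' : 0 <= t * (2 * b k - lam k) by lra.
have hi' : 0 <= t * (2 * lam k - b k).
  have := mulr_ge0 (ltW t_gt0) (lam_ge0 k); lra.
rewrite pmulr_rge0 // in lo'; rewrite pmulr_rge0 // in hi'.
have := lam_ge0 k; lra.
Qed.

Lemma solves_delta_sum_norm {b : 'I_n -> R} {i : 'I_n} : s * (7 - 3 * t) <= t -> t <= 2 / 3 -> 2 * s < t ^+ 2 ->
  solves t lam c b (fun k => (i == k)%:R) ->
  3 * (s * \sum_j `|b j|) <= 1 /\ s * \sum_j `|b j| < t.
Proof.
move=> st7 t23 st2 hb; have t0 := t_gt0.
have Sb : \sum_j b j = 1 by rewrite (solves_sum hb) sumr_delta.
set S : R := \sum_j `|b j|.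
have S0 : 0 <= S by apply: sumr_ge0.
have L1 : (t - s) * S <= \sum_k ((i == k)%:R + (1 - t) * lam k).
  apply: le_trans (solves_sum_norm_le hb) _; rewrite Sb; apply: ler_sum => k _.
  apply: le_trans (ler_normB _ _) _; rewrite mulr1 ger0_norm ?ger0_norm //.
  by rewrite mulr_ge0 // subr_ge0; apply: le_trans t23 _; lra.
rewrite big_split /= sumr_delta -mulr_sumr lam_sum1 mulr1 in L1.
have ts : s < t.
  have : t ^+ 2 <= t * (2 / 3) by rewrite expr2 ler_wpM2l // ltW.
  lra.
split.
- have : 3 * s * ((t - s) * S) <= 3 * s * (2 - t).
    by apply: ler_wpM2l; [rewrite mulr_ge0 | lra].
  move=> h; have : 0 <= (1 - 3 * (s * S)) * (t - s) by lra.
  by rewrite pmulr_lge0 ?subr_gt0 // subr_ge0.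
- have : s * ((t - s) * S) <= s * (2 - t) by apply: ler_wpM2l => //; lra.
  move=> h; have : 0 < (t - s * S) * (t - s) by lra.
  by rewrite pmulr_lgt0 ?subr_gt0 // subr_gt0.
Qed.

Lemma solves_delta b i : s * (7 - 3 * t) <= t -> t <= 2 / 3 -> 2 * s < t ^+ 2 ->
  solves t lam c b (fun k => (i == k)%:R) ->
  [/\ \sum_j b j = 1, 0 < t * b i, t * b i <= 4 / 3 & forall j, j != i -> b j <= 0].
Proof.
move=> st7 t23 st2 hb; have t0 := t_gt0.
have Sb : \sum_j b j = 1 by rewrite (solves_sum hb) sumr_delta.
have [sS13 sSt] := solves_delta_sum_norm st7 t23 st2 hb.
set S : R := \sum_j `|b j| in sS13 sSt.
have S0 : 0 <= S by apply: sumr_ge0.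
have lam_le1 k : lam k <= 1 by rewrite -lam_sum1 (bigD1 k) //= lerDl sumr_ge0.
have coord k :
    `|t * b k - ((i == k)%:R - (1 - t) * lam k)| <= lam k * (s * S).
  by have := solves_coord_bound k hb; rewrite Sb mulr1 (mulrC s) -mulrA.
split=> //.
- have := coord i; rewrite eqxx /= ler_norml => /andP [lo _].
  have : 0 <= (1 - lam i) * (1 - t + s * S).
    by apply: mulr_ge0; [rewrite subr_ge0 | have := mulr_ge0 s_ge0 S0; lra].
  lra.
- have := coord i; rewrite eqxx /= ler_norml => /andP [_ hi].
  have : 0 <= (1 - lam i) * (s * S) by rewrite mulr_ge0 ?mulr_ge0 // subr_ge0.
  have : 0 <= (1 - t) * lam i by rewrite mulr_ge0 // subr_ge0; lra.
  lra.
- move=> j /negbTE ij; have := coord j; rewrite eq_sym ij /= ler_norml => /andP [_ hi].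
  have : 0 <= lam j * (1 - t - s * S) by rewrite mulr_ge0 //; lra.
  by move=> gap; rewrite -(pmulr_rle0 _ t_gt0); lra.
Qed.

End PerturbedBarycentric.

Lemma rounding_params {R : realFieldType} {D : R} : 1 <= D ->
  let t := 2 / D ^+ 2 / 3 in let s := (D ^+ 7)^-1 / 8 in
  [/\ 0 < s, 3 * s <= t, s * (7 - 3 * t) <= t, t <= 2 / 3 & 2 * s < t ^+ 2].
Proof.
move=> D1 t s; set x := D^-1.
have x_gt0 : 0 < x by rewrite invr_gt0; lra.
have x_le1 : x <= 1 by rewrite invr_le1 // ?unitfE ?gt_eqF //; lra.
have tE : t = 2 / 3 * x ^+ 2 by rewrite /t /x exprVn; field; rewrite gt_eqF //; lra.
have sE : s = x ^+ 2 * x ^+ 5 / 8 by rewrite /s /x -exprD exprVn.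
have x2_gt0 : 0 < x ^+ 2 by rewrite exprn_gt0.
have x2_le1 : x ^+ 2 <= 1 by rewrite exprn_ile1 // ltW.
have x5_le_x2 : x ^+ 5 <= x ^+ 2 by rewrite ler_wiXn2l // ltW.
have x5_le1 : x ^+ 5 <= 1 by lra.
have x5_x2 : x ^+ 5 * (1 - x ^+ 2) <= 1 - x ^+ 2 by rewrite ler_piMl // subr_ge0.
rewrite sE tE; split.
- by rewrite divr_gt0 ?mulr_gt0 ?exprn_gt0.
- by have := ler_wpM2l (ltW x2_gt0) x5_le1; lra.
- by have := ler_wpM2l (ltW x2_gt0) x5_x2; nra.
- lra.
- by have := ler_wpM2l (ltW x2_gt0) x5_le_x2; nra.
Qed.

Lemma simplex_pivot {R : realType} {V : lmodType R} {n} (g : 'I_n -> V) {b : 'I_n -> R} {i} :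
  \sum_j b j = 1 -> 0 < b i -> (forall j, j != i -> b j <= 0) ->
  exists mu : 'I_n -> R, [/\ in_simplex mu, mu i = (b i)^-1 &
    g i = mu i *: (\sum_j b j *: g j) + \sum_(j | j != i) mu j *: g j].
Proof.
move=> b1 bi_gt0 b_le0; have bi0 : b i != 0 by rewrite gt_eqF.
have b1' : \sum_(j | j != i) b j = 1 - b i.
  by rewrite -b1 [in RHS](bigD1 i) //= addrAC subrr add0r.
exists (fun j => if j == i then (b i)^-1 else - b j / b i); split.
- split=> [j|].
    case: eqP => [_|/eqP /b_le0 bj]; first by rewrite invr_ge0 ltW.
    by rewrite divr_ge0 ?oppr_ge0 // ltW.
  rewrite (bigD1 i) //= eqxx (eq_bigr (fun j => - b j / b i)); last by move=> j /negbTE ->.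
  by rewrite -mulr_suml sumrN b1'; field.
- by rewrite eqxx.
- rewrite eqxx [X in _ + X](eq_bigr (fun j => (- b j / b i) *: g j)); last first.
    by move=> j /negbTE ->.
  rewrite (bigD1 i) //= scalerDr scalerA mulVf // scale1r scaler_sumr -addrA -big_split /=.
  rewrite big1 ?addr0 // => j _.
  by rewrite scalerA -scalerDl (_ : _ + _ = 0) ?scale0r //; field.
Qed.

Definition round_point {R : realType} {d} (x : 'rV[R]_d) : 'rV[R]_d :=
  \row_k (Num.floor (x 0 k + 2^-1))%:~R.

Lemma round_point_int {R : realType} {d} (x : 'rV[R]_d) : is_int_point (round_point x).
Proof. by move=> k; rewrite mxE intr_int. Qed.

Lemma sqnorm_round_point_sub {R : realType} {d} (x : 'rV[R]_d) :
  sqnorm (round_point x - x) <= d%:R / 4.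
Proof.
rewrite /sqnorm (_ : d%:R / 4 = \sum_(k < d) 4^-1 :> R); last first.
  by rewrite sumr_const card_ord mulr_natl.
apply: ler_sum => k _; rewrite !mxE.
have := floor_le (x 0 k + 2^-1); have := floorD1_gt (x 0 k + 2^-1); rewrite intrD.
set z := (Num.floor _)%:~R; nra.
Qed.

Section Rounding.
Context {R : realType} {d : nat} {v : 'I_d.+1 -> 'rV[R]_d}.
Hypothesis d_gt0 : (0 < d)%N.
Let D : R := d%:R.
Hypothesis hball : forall x, ball_euclid 0 (4 * D ^+ 8) x -> conv v x.
Let t : R := 2 / D ^+ 2 / 3.
Let s : R := (D ^+ 7)^-1 / 8.
Let g i := round_point (t *: v i).

Fact dim_ge1 : 1 <= D.
Proof. by rewrite ler1n. Qed.

Fact radius_gt0 : 0 < 4 * D ^+ 8.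
Proof. by rewrite mulr_gt0 // exprn_gt0 // (lt_le_trans ltr01 dim_ge1). Qed.

Lemma rounded_in_dilate i : dilate (2 / D ^+ 2) (conv v) (g i).
Proof.
have D1 := dim_ge1; have D0 : D != 0 by rewrite gt_eqF //; lra.
set e := g i - t *: v i.
(* g i = (2 / D^2) ((1/3) v_i + (2/3) (3 D^2 / 4) e), and the rescaled rounding
   error e still lies in the inscribed ball. *)
exists ((1 / 3) *: v i + (1 - 1 / 3) *: ((3 * D ^+ 2 / 4) *: e)); split.
  apply: conv_convex; [lra | exact: conv_vertex | apply: hball; split].
    by rewrite mulr_ge0 // exprn_ge0 //; lra.
  rewrite subr0 sqnormZ; have := sqnorm_round_point_sub (t *: v i); rewrite -/e -/D => he.
  have D5 : D ^+ 5 <= D ^+ 16 by rewrite ler_weXn2l.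
  have D1' : 1 <= D ^+ 5 by rewrite exprn_ege1.
  have := ler_wpM2l (sqr_ge0 (3 * D ^+ 2 / 4)) he.
  rewrite (_ : (3 * D ^+ 2 / 4) ^+ 2 * (D / 4) = 9 / 64 * D ^+ 5); last by field.
  rewrite (_ : (4 * D ^+ 8) ^+ 2 = 16 * D ^+ 16); last by ring.
  lra.
rewrite scalerDr !scalerA (_ : 2 / D ^+ 2 * (1 / 3) = t); last by rewrite /t; field.
rewrite (_ : 2 / D ^+ 2 * (1 - 1 / 3) * (3 * D ^+ 2 / 4) = 1); last by field.
by rewrite scale1r /e addrC subrK.
Qed.

Section Coordinates.
Context {lam0 : 'I_d.+1 -> R}.
Hypotheses (lam0_simplex : in_simplex lam0) (lam0_v : \sum_j lam0 j *: v j = 0).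

Lemma rounding_perturbation : exists c : 'I_d.+1 -> 'I_d.+1 -> R,
  [/\ forall j, \sum_k c j k *: v k = g j - t *: v j, forall j, \sum_k c j k = 0
    & forall j k, `|c j k| <= s * lam0 k].
Proof.
have D1 := dim_ge1; have [s_gt0 _ _ _ _] := rounding_params D1.
have e_small j : sqnorm (g j - t *: v j) <= (s * (4 * D ^+ 8)) ^+ 2.
  rewrite (_ : s * (4 * D ^+ 8) = D / 2); last by rewrite /s; field; rewrite gt_eqF //; lra.
  apply: le_trans (sqnorm_round_point_sub _) _; rewrite -/D expr_div_n.
  have : D <= D ^+ 2 by rewrite expr2 ler_peMl //; lra.
  lra.
have := fun j => small_vector_decomp radius_gt0 hball lam0_simplex lam0_v s_gt0 (e_small j).
by case/fin_all_exists => c hc; exists c; split=> j; case: (hc j) => cv [c0 cs].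
Qed.

Context {c : 'I_d.+1 -> 'I_d.+1 -> R}.
Hypotheses (c_v : forall j, \sum_k c j k *: v k = g j - t *: v j).
Hypotheses (c_sum0 : forall j, \sum_k c j k = 0) (c_small : forall j k, `|c j k| <= s * lam0 k).

Lemma rounded_beta j : g j = \sum_k beta t lam0 c j k *: v k.
Proof.
rewrite /beta.
under eq_bigr do rewrite !scalerDl -[(t * _) *: _]scalerA -[((1 - t) * _) *: _]scalerA.
rewrite !big_split /= -!scaler_sumr sum_deltaZ lam0_v scaler0 addr0 c_v.
by rewrite addrC subrK.
Qed.

Lemma rounded_solves {b tau : 'I_d.+1 -> R} :
  solves t lam0 c b tau -> \sum_j b j *: g j = \sum_k tau k *: v k.
Proof.
move=> hb; under eq_bigr do rewrite rounded_beta scaler_sumr.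
rewrite exchange_big /=; apply: eq_bigr => k _.
by rewrite -hb scaler_suml; apply: eq_bigr => j _; rewrite scalerA.
Qed.

Lemma rounded_bary_zero lam : in_simplex lam -> \sum_i lam i *: v i = 0 ->
  exists lam' : 'I_d.+1 -> R, in_simplex lam' /\ \sum_i lam' i *: g i = 0 /\
    (forall i, lam' i / 2 <= lam i /\ lam i <= 2 * lam' i).
Proof.
move=> [lam_ge0 lam_sum1] lam_v; case: lam0_simplex => lam0_ge0 lam0_sum1.
have [s_gt0 s3t _ _ _] := rounding_params dim_ge1.
have [t_gt0 st] : 0 < t /\ s < t by rewrite /t /s; split; lra.
have lamE i : lam i = lam0 i.
  apply/eqP; rewrite -subr_eq0; apply/eqP; move: i.
  apply: (conv_ball_affine_indep radius_gt0 hball (fun i => lam i - lam0 i)).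
    by under eq_bigr do rewrite scalerBl; rewrite sumrB lam_v lam0_v subrr.
  by rewrite sumrB lam_sum1 lam0_sum1 subrr.
have [b hb] := solves_exists t_gt0 lam0_sum1 c_sum0 c_small lam0 st.
have [b_sum1 b_bounds] := solves_lam t_gt0 lam0_ge0 lam0_sum1 c_sum0 c_small b s3t hb.
exists b; split; first by split=> // k; case: (b_bounds k).
split; first by rewrite (rounded_solves hb) lam0_v.
by move=> k; rewrite lamE; case: (b_bounds k) => _.
Qed.

Lemma rounded_vertex_comb i : exists mu : 'I_d.+1 -> R, in_simplex mu /\
  1 / (2 * D ^+ 2) <= mu i /\ g i = mu i *: v i + \sum_(j < d.+1 | j != i) mu j *: g j.
Proof.
case: lam0_simplex => lam0_ge0 lam0_sum1.
have [s_gt0 s3t st7 t23 st2] := rounding_params dim_ge1.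
have [t_gt0 st] : 0 < t /\ s < t by rewrite /t /s; split; lra.
have [b hb] := solves_exists t_gt0 lam0_sum1 c_sum0 c_small (fun k => (i == k)%:R) st.
have [b_sum1 tbi_gt0 tbi_le bj_le0] :=
  solves_delta t_gt0 (ltW s_gt0) lam0_ge0 lam0_sum1 c_sum0 c_small b i st7 t23 st2 hb.
have bi_gt0 : 0 < b i by rewrite -(pmulr_rgt0 _ t_gt0).
have [mu [mu_simplex muE gE]] := simplex_pivot g b_sum1 bi_gt0 bj_le0.
exists mu; split=> //; split; last by rewrite gE (rounded_solves hb) sum_deltaZ.
have D_gt0 : 0 < D by have := dim_ge1; lra.
rewrite muE div1r lef_pV2 ?posrE ?mulr_gt0 ?exprn_gt0 //.
rewrite -(ler_pM2l t_gt0) (_ : t * (2 * D ^+ 2) = 4 / 3) //.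
by rewrite /t; field; rewrite gt_eqF.
Qed.

End Coordinates.
End Rounding.

Theorem mainTheorem6 (R : realType) (d : nat) (v : 'I_d.+1 -> 'rV[R]_d) :
  (forall x, ball_euclid 0 (4 * d%:R ^+ 8) x -> conv v x) ->
  exists g : 'I_d.+1 -> 'rV[R]_d,
    (forall i, is_int_point (g i) /\ dilate (2 / d%:R ^+ 2) (conv v) (g i)) /\
    (forall lam : 'I_d.+1 -> R, in_simplex lam ->
       \sum_(i < d.+1) lam i *: v i = 0 ->
       exists lam' : 'I_d.+1 -> R, in_simplex lam' /\
         \sum_(i < d.+1) lam' i *: g i = 0 /\
         (forall i, lam' i / 2 <= lam i /\ lam i <= 2 * lam' i)) /\
    (forall i : 'I_d.+1, exists mu : 'I_d.+1 -> R, in_simplex mu /\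
       1 / (2 * d%:R ^+ 2) <= mu i /\
       g i = mu i *: v i + \sum_(j < d.+1 | j != i) mu j *: g j).
Proof.
(* In dimension 0 all points coincide, and 1 / (2 * 0) = 0. *)
case: d v => [|d] v hball.
  exists v; split; [|split].
  - move=> i; split; first by case.
    by exists (v i); split; [exact: conv_vertex | apply/rowP => -[]].
  - move=> lam [lam_ge0 lam_sum1] _; exists lam; split=> //; split; first by apply/rowP => -[].
    by move=> i; have := lam_ge0 i; lra.
  - move=> i; exists (fun=> 1); split; first by split=> //; rewrite big_ord1.
    split; first by rewrite expr0n /= mulr0 invr0 mulr0.
    by apply/rowP => -[].
have d_gt0 : (0 < d.+1)%N by [].
have r_ge0 : 0 <= 4 * d.+1%:R ^+ 8 :> R by rewrite mulr_ge0 ?exprn_ge0.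
have [lam0 [lam0_simplex lam0_v]] := hball 0 (ball_euclid_center r_ge0).
have [c [c_v c_sum0 c_small]] := rounding_perturbation d_gt0 hball lam0_simplex (esym lam0_v).
exists (fun i => round_point (2 / d.+1%:R ^+ 2 / 3 *: v i)); split; [|split].
- by move=> i; split; [exact: round_point_int | exact: rounded_in_dilate].
- exact (rounded_bary_zero d_gt0 hball lam0_simplex (esym lam0_v) c_v c_sum0 c_small).
- exact (rounded_vertex_comb d_gt0 lam0_simplex (esym lam0_v) c_v c_sum0 c_small).
Qed.
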